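(* For every integer $N\ge1$, $D^{\mathcal{PARITY}}({\rm MAJORITY})=D^{\rm XOR}({\rm MAJORITY})=N+1-w(N)$, where ${\rm MAJORITY}$ is on $N$-bit inputs.
   Context: For $X=X_0X_1\cdots X_{N-1}\in\{0,1\}^N$, ${\rm MAJORITY}(X)=0$ if $X$ contains more zeros than ones and ${\rm MAJORITY}(X)=1$ otherwise. $w(N)$ denotes the number of ones in the binary representation of $N$. A $\mathcal{PARITY}$-decision tree on $N$-bit inputs is a deterministic adaptive algorithm that on input $X$ makes a sequence of queries, each being the parity $\bigoplus_{i\in T}X_i$ for some nonempty $T\subseteq\{0,\dots,N-1\}$, each chosen depending on previous answers, and then outputs a value; an XOR decision tree is the same but each query must be either a single bit $X_i$ or $X_i\oplus X_j$ for some $i,j$. The cost is the maximum over inputs of the number of queries. $D^{\mathcal{PARITY}}(f)$ (resp. $D^{\rm XOR}(f)$) is the minimum cost of a $\mathcal{PARITY}$-decision tree (resp. XOR decision tree) that outputs $f(X)$ on every input $X$. *)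

From mathcomp Require Import all_boot.
Set Implicit Arguments. Unset Strict Implicit. Unset Printing Implicit Defensive.

Definition input (N : nat) := {ffun 'I_N -> bool}.

Definition ones N (X : input N) : nat := #|[set i | X i]|.

Definition majority N (X : input N) : bool := ~~ (ones X < N - ones X).

(* w(N) : number of ones in binary representation of N
   (bits of index >= N+1 are zero since N < 2^(N+1)) *)
Definition w (N : nat) : nat := \sum_(i < N.+1) ((N %/ 2 ^ i) %% 2).

(* Adaptive deterministic algorithms with parity queries, as binary trees:
   a node queries the parity of X on T, goes left on answer false,
   right on answer true. *)
Inductive qtree (N : nat) : Type :=
| Leaf of bool
| Query of {set 'I_N} & qtree N & qtree N.

Definition parity N (T : {set 'I_N}) (X : input N) : bool :=
  \big[addb/false]_(i in T) X i.

Fixpoint eval N (t : qtree N) (X : input N) : bool :=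
  match t with
  | Leaf b => b
  | Query T l r => if parity T X then eval r X else eval l X
  end.

Fixpoint nqueries N (t : qtree N) (X : input N) : nat :=
  match t with
  | Leaf _ => 0
  | Query T l r => (if parity T X then nqueries r X else nqueries l X).+1
  end.

Definition cost N (t : qtree N) : nat := \max_(X : input N) nqueries t X.

Fixpoint all_queries N (P : {set 'I_N} -> bool) (t : qtree N) : bool :=
  match t with
  | Leaf _ => true
  | Query T l r => [&& P T, all_queries P l & all_queries P r]
  end.

Definition parity_tree N (t : qtree N) : bool :=
  all_queries (fun T => T != set0) t.

(* XOR trees: queries X_i (|T| = 1) or X_i xor X_j (|T| = 2, i <> j;
   the case i = j would be the constant query 0, which is useless) *)
Definition xor_tree N (t : qtree N) : bool :=
  all_queries (fun T => (#|T| == 1) || (#|T| == 2)) t.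

Definition computes N (t : qtree N) (f : input N -> bool) : Prop :=
  forall X, eval t X = f X.

Definition is_Dcomplexity N (valid : qtree N -> bool) (f : input N -> bool)
  (k : nat) : Prop :=
  (exists t, valid t /\ computes t f /\ cost t = k) /\
  (forall t, valid t -> computes t f -> k <= cost t).

Definition D_PARITY_is N (f : input N -> bool) (k : nat) : Prop :=
  is_Dcomplexity (@parity_tree N) f k.

Definition D_XOR_is N (f : input N -> bool) (k : nat) : Prop :=
  is_Dcomplexity (@xor_tree N) f k.

From mathcomp Require Import all_boot all_algebra zify.
Set Implicit Arguments. Unset Strict Implicit. Unset Printing Implicit Defensive.

(* Upper bound: greedily maintain blocks of 2^e input bits known to be equal, each
   represented by one of its variables, with the discarded bits balanced between ones
   and zeros.  The XOR of the representatives of two blocks of the same size either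
   merges them into one block of twice the size, or shows that they cancel out.  Once
   all sizes are distinct, the largest block outweighs the others and decides the
   majority.  A merge keeps the total size and removes one block, a cancellation
   removes two blocks and at most one binary digit of the total size, so starting from
   N blocks of size 1 at most N + 1 - w(N) queries are made.

   Lower bound: along a parity decision tree of depth d every leaf is an affine
   subspace of codimension at most d, on which all character sums are divisible by
   2^(N-d).  Hence 2^(N-d) divides the top Fourier coefficient of MAJORITY, which is
   +-C(N-1, ceil(N/2)-1), and by Kummer's theorem its 2-adic valuation is below w(N). *)

Lemma sum_bits_widen n K M : n < 2 ^ K -> K <= M ->
  \sum_(i < M) (n %/ 2 ^ i) %% 2 = \sum_(i < K) (n %/ 2 ^ i) %% 2.
Proof.
move=> ltnK leKM; rewrite [RHS](big_ord_widen _ (fun i => (n %/ 2 ^ i) %% 2) leKM).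
rewrite [LHS](bigID (fun i : 'I_M => i < K)) /=.
rewrite [X in _ + X]big1 ?addn0 // => i; rewrite -leqNgt => leKi.
by rewrite divn_small // (leq_trans ltnK) // leq_exp2l.
Qed.

Lemma w_bits n K : n < 2 ^ K -> w n = \sum_(i < K) (n %/ 2 ^ i) %% 2.
Proof.
move=> ltnK; have ltn_n : n < 2 ^ n.+1 by rewrite ltnW // ltn_expl.
rewrite /w -(sum_bits_widen ltn_n (leq_maxr K n.+1)).
exact: sum_bits_widen ltnK (leq_maxl K _).
Qed.

Lemma wE n : w n = odd n + w n./2.
Proof.
have ltn_n : n < 2 ^ n.+1 by rewrite ltnW // ltn_expl.
have ltn_half : n./2 < 2 ^ n by rewrite -divn2 ltn_divLR // -expnSr.
rewrite (w_bits ltn_n) (w_bits ltn_half) big_ord_recl expn0 divn1 modn2.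
by congr (_ + _); apply: eq_bigr => i _; rewrite expnS divnMA divn2.
Qed.

Lemma w0 : w 0 = 0.
Proof. by rewrite /w big_ord1. Qed.

Lemma w_double n : w n.*2 = w n.
Proof. by rewrite wE odd_double doubleK. Qed.

Lemma w_doubleS n : w n.*2.+1 = (w n).+1.
Proof. by rewrite wE /= odd_double uphalf_double. Qed.

Lemma w_pow2 k : w (2 ^ k) = 1.
Proof. by elim: k => [|k IHk]; rewrite ?(w_doubleS 0) ?w0 // expnS mul2n w_double. Qed.

Lemma logn2_double n : 0 < n -> logn 2 n.*2 = (logn 2 n).+1.
Proof. by move=> n_gt0; rewrite -mul2n lognM // -[logn 2 2]/1. Qed.

Lemma logn2_odd n : odd n -> logn 2 n = 0.
Proof. by move=> n_odd; rewrite lognE dvdn2 n_odd andbF. Qed.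

(* Adding 1 to n turns its trailing ones into zeros and one more zero into a one. *)
Lemma logn2S_add_w n : logn 2 n.+1 + w n.+1 = (w n).+1.
Proof.
elim/ltn_ind: n => n IHn; have := odd_double_half n.
case: (odd n) => [|] /= n_eq; last first.
  by rewrite -n_eq add0n logn2_odd /= ?odd_double // w_doubleS w_double.
have lt_half : n./2 < n by rewrite -[X in _ < X]n_eq add1n ltnS -addnn leq_addr.
by rewrite -n_eq add1n -doubleS logn2_double // w_double w_doubleS addSn IHn.
Qed.

Lemma logn2_fact_add_w n : logn 2 n`! + w n = n.
Proof.
elim: n => [|n IHn]; first by rewrite fact0 logn1 w0.
have := logn2S_add_w n; rewrite factS lognM ?fact_gt0 //; lia.
Qed.

Lemma logn2_bin_add_w a b : logn 2 'C(a + b, a) + w (a + b) = w a + w b.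
Proof.
have := congr1 (logn 2) (bin_fact (leq_addr b a)); rewrite addKn.
rewrite !lognM ?muln_gt0 ?fact_gt0 ?bin_gt0 ?leq_addr //.
have := logn2_fact_add_w a; have := logn2_fact_add_w b.
have := logn2_fact_add_w (a + b); lia.
Qed.

Lemma w_addn a b : w (a + b) <= w a + w b.
Proof. by rewrite -logn2_bin_add_w leq_addl. Qed.

Lemma logn2_central_bin m : logn 2 'C(m.*2, m) = w m.
Proof. by have := logn2_bin_add_w m m; rewrite addnn w_double; lia. Qed.

Lemma logn2_bin_lt_w N : 0 < N -> logn 2 'C(N.-1, (N.+1 %/ 2).-1) < w N.
Proof.
move=> N_gt0; have := odd_double_half N.
case: (odd N) => /= N_eq; rewrite -{}N_eq in N_gt0 *.
  have -> : ((1 + N./2.*2).+1 %/ 2).-1 = N./2 by rewrite -addnn; lia.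
  by rewrite add1n /= logn2_central_bin w_doubleS.
rewrite add0n w_double; case: N./2 N_gt0 => [|m] // _.
have -> : ((m.+1.*2).+1 %/ 2).-1 = m by rewrite -addnn; lia.
have central_bin : 'C(m.+1.*2, m.+1) = 'C(m.*2.+1, m).*2.
  have le_m1 : m.+1 <= m.*2.+1 by rewrite ltnS -addnn leq_addr.
  have := bin_sub le_m1; have -> : m.*2.+1 - m.+1 = m by rewrite -addnn; lia.
  by move=> sym; rewrite doubleS binS -sym addnn.
rewrite -logn2_central_bin central_bin doubleS logn2_double //.
by rewrite bin_gt0 -addnn -addSn leq_addl.
Qed.

Lemma sum_pow2_uniq_lt K (s : seq nat) :
  uniq s -> {in s, forall e, e < K} -> \sum_(e <- s) 2 ^ e < 2 ^ K.
Proof.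
elim: K s => [|K IHK] s s_uniq s_lt.
  case: s s_uniq s_lt => [|e s] _ s_lt; first by rewrite big_nil.
  by have := s_lt e (mem_head _ _).
have lt_K e : e \in s -> e != K -> e < K.
  by move=> /s_lt; rewrite ltnS leq_eqVlt => /orP[/eqP-> /eqP|].
have [Ks | notKs] := boolP (K \in s); last first.
  rewrite (@leq_trans (2 ^ K)) ?leq_exp2l ?IHK // => e es.
  by rewrite lt_K //; apply: contraNneq notKs => <-.
rewrite (perm_big _ (perm_to_rem Ks)) big_cons expnS mul2n -addnn ltn_add2l.
rewrite IHK ?rem_uniq // => e.
by rewrite mem_rem_uniq // inE => /andP[neK es]; exact: lt_K.
Qed.

Lemma exists_max_seq (T : eqType) (f : T -> nat) (y : T) (s : seq T) :
  exists2 m, m \in y :: s & {in y :: s, forall p, f p <= f m}.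
Proof.
elim: s y => [|z s IHs] y.
  by exists y => [|p]; rewrite ?mem_head // inE => /eqP->.
have [m ms m_max] := IHs z; have [le_ym | lt_my] := leqP (f y) (f m).
  exists m => [|p]; first by rewrite inE ms orbT.
  by rewrite inE => /predU1P[-> //|/m_max].
exists y => [|p]; first exact: mem_head.
rewrite inE => /predU1P[-> //|/m_max le_pm]; exact: leq_trans le_pm (ltnW lt_my).
Qed.

Lemma parity1 N (i : 'I_N) X : parity [set i] X = X i.
Proof. by rewrite /parity big_set1. Qed.

Lemma parity2 N (i j : 'I_N) X : i != j -> parity [set i; j] X = X i (+) X j.
Proof. by move=> neq_ij; rewrite /parity big_setU1 ?big_set1 ?inE. Qed.

Section GreedyPairing.

Variable N : nat.

Implicit Types (X : input N) (s : seq ('I_N * nat)).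

(* A pair (i, e) of a state stands for 2 ^ e input bits, all equal to X i;
   the bits no longer represented contain as many ones as zeros. *)
Definition weight s := \sum_(p <- s) 2 ^ p.2.

Definition weight_of X b s := \sum_(p <- s | X p.1 == b) 2 ^ p.2.

Definition balanced X s := ones X + weight_of X false s = N - ones X + weight_of X true s.

Definition solves s (t : qtree N) :=
  [/\ xor_tree t, forall X, balanced X s -> eval t X = majority X
    & forall X, nqueries t X <= size s + 1 - w (weight s)].

Lemma weight_ofE X s : weight_of X true s + weight_of X false s = weight s.
Proof.
rewrite /weight (bigID (fun p => X p.1)) /=.
by congr (_ + _); apply: eq_bigl => p; case: (X p.1).
Qed.

Lemma w_weight_le_size s : w (weight s) <= size s.
Proof.
elim: s => [|p s IHs]; first by rewrite /weight big_nil w0.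
by rewrite /weight big_cons (leq_trans (w_addn _ _)) // w_pow2 add1n ltnS.
Qed.

Lemma solves_perm s s' t : perm_eq s s' -> solves s t -> solves s' t.
Proof.
move=> perm_ss' [t_xor t_maj t_cost].
have weight_ofP X b : weight_of X b s' = weight_of X b s.
  by rewrite /weight_of (perm_big _ perm_ss').
split=> // X; first by rewrite /balanced !weight_ofP; exact: t_maj.
by rewrite -(perm_size perm_ss') /weight -(perm_big _ perm_ss').
Qed.

Lemma solves_nil : solves [::] (Leaf N true).
Proof.
by split=> // X; rewrite /balanced /weight_of !big_nil !addn0 /majority => <-; rewrite ltnn.
Qed.

(* Once the exponents are distinct, the largest block outweighs all the others together. *)
Lemma solves_dominant m s : uniq (map snd (m :: s)) -> {in s, forall p, p.2 <= m.2} ->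
  solves (m :: s) (Query [set m.1] (Leaf N false) (Leaf N true)).
Proof.
move=> /= /andP[m_notin s_uniq] le_sm.
have lt_s : weight s < 2 ^ m.2.
  rewrite /weight -(big_map snd predT) sum_pow2_uniq_lt // => e /mapP[p ps ->].
  by rewrite ltn_neqAle le_sm // andbT; apply: contraNneq m_notin => <-; exact: map_f.
split=> [|X|X]; rewrite /= ?parity1; first by rewrite /xor_tree /= cards1.
  have := weight_ofE X s; rewrite /balanced /weight_of !big_cons /majority.
  by case: (X m.1) => /=; lia.
by have := w_weight_le_size (m :: s); case: (X m.1) => /=; lia.
Qed.

Lemma solves_pair a b r t_merge t_cancel : a.1 != b.1 -> a.2 = b.2 ->
  solves ((a.1, a.2.+1) :: r) t_merge -> solves r t_cancel ->
  solves [:: a, b & r] (Query [set a.1; b.1] t_merge t_cancel).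
Proof.
move=> neq_ab eq_ab [m_xor m_maj m_cost] [c_xor c_maj c_cost].
have weightE : weight [:: a, b & r] = weight ((a.1, a.2.+1) :: r).
  by rewrite /weight !big_cons addnA expnS -eq_ab mul2n addnn.
split=> [|X|X]; rewrite /= ?parity2 //.
- by move: m_xor c_xor; rewrite /xor_tree /= cards2 neq_ab => -> ->.
- move=> bal; case Xa: (X a.1); case Xb: (X b.1) => /=;
    [apply: m_maj | apply: c_maj | apply: c_maj | apply: m_maj];
    move: bal; rewrite /balanced /weight_of !big_cons /= Xa Xb ?expnS -?eq_ab /=; lia.
- have := w_addn (2 ^ a.2.+1) (weight r); rewrite w_pow2.
  have := w_weight_le_size r; have := m_cost X; have := c_cost X.
  rewrite weightE /weight big_cons /=; case: (_ (+) _); lia.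
Qed.

Lemma exists_pair_same_exponent s : ~~ uniq (map snd s) ->
  exists a b r, perm_eq s [:: a, b & r] /\ a.2 = b.2.
Proof.
elim: s => [|x s IHs] //=; rewrite negb_and negbK => /orP[/mapP[y ys eq_xy] | /IHs].
  by exists x, y, (rem y s); rewrite perm_cons perm_to_rem.
move=> [a [b [r [perm_s eq_ab]]]]; exists a, b, (x :: r); split=> //.
rewrite -(perm_cons x) in perm_s; apply: perm_trans perm_s _.
by rewrite -[[:: x, a, b & r]]/([:: x] ++ [:: a; b] ++ r) perm_catCA.
Qed.

Lemma exists_solves s : uniq (map fst s) -> exists t, solves s t.
Proof.
have [n] := ubnP (size s); elim: n s => // n IHn s /[!ltnS] size_s fst_uniq.
have [snd_uniq | /exists_pair_same_exponent [a [b [r [perm_s eq_ab]]]]] :=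
  boolP (uniq (map snd s)).
  case: s snd_uniq {size_s fst_uniq} => [|y s] snd_uniq.
    by exists (Leaf N true); exact: solves_nil.
  have [m ms m_max] := exists_max_seq snd y s; have perm_m := perm_to_rem ms.
  exists (Query [set m.1] (Leaf N false) (Leaf N true)).
  apply: (solves_perm (s := m :: rem m (y :: s))); first by rewrite perm_sym.
  apply: solves_dominant; first by rewrite -(perm_uniq (perm_map snd perm_m)).
  by move=> p /mem_rem /m_max.
move: fst_uniq; rewrite (perm_uniq (perm_map fst perm_s)) /= inE negb_or.
case/and3P=> /andP[neq_ab a_notin] b_notin r_uniq.
have size_r : (size r).+1 < n by move: size_s; rewrite (perm_size perm_s).
have merge_uniq : uniq (map fst ((a.1, a.2.+1) :: r)) by rewrite /= a_notin.
have [t_merge merge_solves] := IHn ((a.1, a.2.+1) :: r) size_r merge_uniq.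
have [t_cancel cancel_solves] := IHn r (ltnW size_r) r_uniq.
exists (Query [set a.1; b.1] t_merge t_cancel).
apply: (solves_perm (s := [:: a, b & r])); first by rewrite perm_sym.
exact: solves_pair.
Qed.

Definition singletons := [seq (i, 0) | i : 'I_N].

Lemma weight_singletons : weight singletons = N.
Proof. by rewrite /weight big_image sum1_card card_ord. Qed.

Lemma balanced_singletons X : balanced X singletons.
Proof.
have ones_eq : weight_of X true singletons = ones X.
  rewrite /weight_of big_map big_enum_cond sum1_card; apply: eq_card => i.
  by rewrite inE unfold_in /= addbT negbK.
have := weight_ofE X singletons; rewrite weight_singletons /balanced ones_eq; lia.
Qed.

End GreedyPairing.

Lemma xor_tree_parity_tree N (t : qtree N) : xor_tree t -> parity_tree t.
Proof.
rewrite /xor_tree /parity_tree.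
elim: t => [//|T l IHl r IHr] /= /and3P[card_T /IHl-> /IHr->].
by rewrite andbT -card_gt0; case/orP: card_T => /eqP->.
Qed.

Lemma majority_upper_bound N : exists2 t, xor_tree t &
  computes t (@majority N) /\ cost t <= N.+1 - w N.
Proof.
have fst_uniq : uniq (map fst (singletons N)) by rewrite -map_comp map_id_in ?enum_uniq.
have [t [t_xor t_maj t_cost]] := exists_solves fst_uniq.
exists t => //; split=> [X|]; first exact/t_maj/balanced_singletons.
apply/bigmax_leqP => X _; move: (t_cost X).
by rewrite weight_singletons size_map size_enum_ord addn1.
Qed.

Section FourierDivisibility.

Import GRing.Theory.
Local Open Scope ring_scope.

(* Pascal's rule: (-1)^k C(n, k) = f (k + 1) - f k for f k = - (-1)^k C(n - 1, k - 1). *)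
Lemma sum_sign_bin_tail (R : pzRingType) n t : (0 < t <= n)%N ->
  \sum_(t <= k < n.+1) (-1) ^+ k * 'C(n, k)%:R = (-1) ^+ t * 'C(n.-1, t.-1)%:R :> R.
Proof.
case: t n => [|t] [|n] // /andP[_ le_tn].
rewrite (telescope_sumr_eq (fun k => - ((-1) ^+ k * 'C(n, k.-1)%:R))).
- by rewrite /= bin_small // mulr0 oppr0 sub0r opprK.
- by rewrite ltnW.
case=> [|k] /andP[lt_tk _] //=.
rewrite binS natrD mulrDr exprS mulN1r mulNr opprK.
by rewrite [in RHS]exprS [in RHS]exprS mulN1r mulN1r opprK.
Qed.

Variable N : nat.

Implicit Types (P : pred (input N)) (S T : {set 'I_N}) (x : input N).

Definition chi S x : int := if parity S x then -1 else 1.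

Definition fourier P S : int := \sum_(x | P x) chi S x.

Definition fourier_dvd P k := forall S, ((2 ^ k)%N%:Z %| fourier P S)%Z.

Definition symdiff S T := [set i | (i \in S) (+) (i \in T)].

Lemma parity_symdiff S T x : parity (symdiff S T) x = parity S x (+) parity T x.
Proof.
have parityE U : parity U x = \big[addb/false]_i ((i \in U) && x i).
  by rewrite /parity big_mkcond; apply: eq_bigr => i _; case: (i \in U).
rewrite !parityE -big_split /=; apply: eq_bigr => i _.
by rewrite inE; case: (i \in S); case: (i \in T); case: (x i).
Qed.

Lemma chi_symdiff S T x : chi (symdiff S T) x = chi S x * chi T x.
Proof. by rewrite /chi parity_symdiff; case: (parity S x); case: (parity T x). Qed.

(* 2 * [parity T x == b] = 1 + (-1)^b chi T x, and chi S * chi T = chi (S Δ T). *)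
Lemma fourier_dvd_restrict P k T b :
  fourier_dvd P k -> fourier_dvd [pred x | P x && (parity T x == b)] k.-1.
Proof.
move=> P_dvd S.
have double_restrict : fourier [pred x | P x && (parity T x == b)] S * 2 =
    fourier P S + (if b then -1 else 1) * fourier P (symdiff S T).
  rewrite /fourier big_mkcondr mulr_suml mulr_sumr -big_split /=; apply: eq_bigr => x _.
  rewrite chi_symdiff /chi; case: (parity S x); case: (parity T x); case: b => /=; lia.
have : ((2 ^ k)%N%:Z %| fourier [pred x | P x && (parity T x == b)] S * 2)%Z.
  by rewrite double_restrict rpredD ?dvdz_mull.
case: k {P_dvd double_restrict} => [|k]; first by rewrite dvd1z.
by rewrite expnS mulnC PoszM dvdz_mul2r.
Qed.

Definition flip i x : input N := [ffun j => if j == i then ~~ x j else x j].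

Lemma flipK i : involutive (flip i).
Proof. by move=> x; apply/ffunP => j; rewrite !ffunE; case: (j == i) => //; rewrite negbK. Qed.

Lemma parity_flip S i x : i \in S -> parity S (flip i x) = ~~ parity S x.
Proof.
move=> iS; rewrite /parity !(bigD1 i iS) /= ffunE eqxx addNb; congr (~~ (_ (+) _)).
by apply: eq_bigr => j /andP[_ neq_ji]; rewrite ffunE (negbTE neq_ji).
Qed.

(* For S nonempty, flipping a coordinate of S pairs the inputs off with opposite characters. *)
Lemma fourier_dvd_all : fourier_dvd predT N.
Proof.
move=> S; have [->|/set0Pn[i iS]] := eqVneq S set0.
  rewrite /fourier (eq_bigr (fun=> 1)) => [|x _]; last by rewrite /chi /parity big_set0.
  by rewrite sumr_const card_ffun card_bool card_ord -natz pmulrn.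
suff -> : fourier predT S = 0 by apply: dvdz0.
have flip_sum : fourier predT S = - fourier predT S.
  rewrite {1}/fourier (reindex_inj (can_inj (flipK i))) -sumrN.
  by apply: eq_bigr => x _; rewrite /chi parity_flip //; case: (parity S x).
lia.
Qed.

Lemma fourier_dvd_tree t P k d :
  fourier_dvd P k -> (forall x, P x -> (nqueries t x <= d)%N) ->
  fourier_dvd [pred x | P x && eval t x] (k - d).
Proof.
elim: t P k d => [b|T l IHl r IHr] P k d P_dvd P_depth S; rewrite /fourier /=.
  case: b {P_depth}; last by rewrite big_pred0 ?dvdz0 // => x; rewrite andbF.
  under eq_bigl => x do rewrite andbT.
  by apply: dvdz_trans (P_dvd S); rewrite dvdzE /= dvdn_exp2l ?leq_subr.
case: d P_depth => [|d] P_depth.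
  by rewrite big_pred0 ?dvdz0 // => x; apply/negP => /andP[/P_depth].
have -> : (k - d.+1 = k.-1 - d)%N by lia.
have branch_dvd b : ((2 ^ (k.-1 - d))%N%:Z %|
    \sum_(x | (P x && (parity T x == b)) && eval (if b then r else l) x) chi S x)%Z.
  have depth x : P x && (parity T x == b) -> (nqueries (if b then r else l) x <= d)%N.
    by case/andP=> /P_depth /= + /eqP <-; case: (parity T x).
  have P_b_dvd := fourier_dvd_restrict T b P_dvd.
  by case: b depth P_b_dvd => depth P_b_dvd; [apply: IHr | apply: IHl].
have branch_sum b : \sum_(x | (P x && (if parity T x then eval r x else eval l x)) &&
      (if b then parity T x else ~~ parity T x)) chi S x =
    \sum_(x | (P x && (parity T x == b)) && eval (if b then r else l) x) chi S x.
  by apply: eq_bigl => x; case: b; case: (parity T x); rewrite /= ?andbT ?andbF.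
rewrite (bigID (fun x => parity T x)) /= (branch_sum true) (branch_sum false).
exact: rpredD.
Qed.

Lemma sum_input_by_ones (V : nmodType) (F : nat -> V) :
  \sum_(x : input N) F (ones x) = \sum_(k < N.+1) F k *+ 'C(N, k).
Proof.
pose indicator (A : {set 'I_N}) : input N := [ffun i => i \in A].
have ones_indicator A : ones (indicator A) = #|A|.
  by apply: eq_card => i; rewrite inE ffunE.
rewrite (reindex indicator) /=; last first.
  apply: onW_bij; exists (fun x : input N => [set i | x i]) => [A|x].
    by apply/setP => i; rewrite inE ffunE.
  by apply/ffunP => i; rewrite ffunE inE.
under eq_bigr => A _ do rewrite ones_indicator.
rewrite (partition_big (fun A : {set 'I_N} => inord #|A| : 'I_N.+1) predT) //=.
apply: eq_bigr => k _.
have card_lt (A : {set 'I_N}) : (#|A| < N.+1)%N.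
  by rewrite ltnS -[X in (_ <= X)%N]card_ord max_card.
rewrite (eq_big (fun A : {set 'I_N} => #|A| == k) (fun=> F k)) => [|A|A /eqP <-].
- by rewrite sumr_const -cardsE card_draws card_ord.
- by rewrite -(inj_eq val_inj) /= inordK.
by rewrite inordK.
Qed.

Lemma chi_setT x : chi setT x = (-1) ^+ ones x.
Proof.
rewrite /chi; have -> : parity setT x = odd (ones x).
  rewrite /ones -sum1_card big_mkcond (big_morph odd oddD (erefl : odd 0 = false)) /parity.
  by apply: eq_big => [i|i _]; rewrite ?inE //; case: (x i).
by rewrite -signr_odd; case: (odd _).
Qed.

Lemma majorityE x : majority x = (N.+1 %/ 2 <= ones x)%N.
Proof.
have : (ones x <= N)%N by rewrite -[X in (_ <= X)%N]card_ord max_card.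
by rewrite /majority -leqNgt; move: (ones x) => o le_oN; apply/idP/idP; lia.
Qed.

Lemma fourier_majority : (0 < N)%N ->
  fourier (@majority N) setT = (-1) ^+ (N.+1 %/ 2) * 'C(N.-1, (N.+1 %/ 2).-1)%:R.
Proof.
move=> N_gt0; set t := (N.+1 %/ 2)%N.
pose F k : int := if (t <= k)%N then (-1) ^+ k else 0.
have -> : fourier (@majority N) setT = \sum_(x : input N) F (ones x).
  by rewrite /fourier big_mkcond; apply: eq_bigr => x _; rewrite majorityE chi_setT.
rewrite sum_input_by_ones -sum_sign_bin_tail; last by rewrite /t; lia.
rewrite big_geq_mkord [RHS]big_mkcond; apply: eq_bigr => k _.
by rewrite /F; case: (t <= k)%N; rewrite ?mul0rn // mulr_natr.
Qed.

End FourierDivisibility.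

Lemma majority_lower_bound N t :
  0 < N -> computes t (@majority N) -> N.+1 - w N <= cost t.
Proof.
move=> N_gt0 t_maj.
have depth x : predT x -> nqueries t x <= cost t by move=> _; apply: leq_bigmax.
have := fourier_dvd_tree (@fourier_dvd_all N) depth setT.
rewrite /fourier (eq_bigl (@majority N)) => [|x]; last by rewrite /= t_maj.
rewrite -/(fourier _ _) fourier_majority // dvdzE abszMsign natz /=.
rewrite pfactor_dvdn ?bin_gt0 //; last by lia.
by have := logn2_bin_lt_w N_gt0; lia.
Qed.

Lemma is_DcomplexityP N (valid : qtree N -> bool) f k t :
  valid t -> computes t f -> cost t <= k ->
  (forall t', valid t' -> computes t' f -> k <= cost t') -> is_Dcomplexity valid f k.
Proof.
move=> t_valid t_f le_cost lower; split=> //; exists t; do !split=> //.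
by apply/eqP; rewrite eqn_leq le_cost lower.
Qed.

Theorem mainTheorem12 (N : nat) (hN : 1 <= N) :
  D_PARITY_is (@majority N) (N.+1 - w N) /\ D_XOR_is (@majority N) (N.+1 - w N).
Proof.
have [t t_xor [t_maj t_cost]] := majority_upper_bound N.
have lower t' : computes t' (@majority N) -> N.+1 - w N <= cost t'.
  exact: majority_lower_bound.
split; [apply: (is_DcomplexityP (xor_tree_parity_tree t_xor)) |
        apply: (is_DcomplexityP t_xor)];
  by [|move=> t' _; apply: lower].
Qed.
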